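(* Let $\mathbf{L}=(L,\le)$ be a finite nontrivial join-semilattice with greatest element $1$ and let $(R,\vee,\circ)$ be a simple subsemiring of $(\mathrm{JM}_1(\mathbf{L}),\vee,\circ)$ with $|R|>2$ such that $f_{a,b}\in R$ for all $a\in L\setminus\{1\}$ and $b\in L$. Then $(L,\vee)$, with action $f\cdot x=f(x)$, is an irreducible $R$-semimodule.
   Context: $\mathrm{JM}_1(\mathbf{L})$ is the set of maps $f:L\to L$ with $f(x\vee y)=f(x)\vee f(y)$ and $f(1)=1$, a semiring under pointwise join and composition. A semiring is simple if its only congruences (equivalences compatible with addition and with left and right multiplication) are the identity and the full relation. $f_{a,b}(x)=b$ if $x\le a$ and $f_{a,b}(x)=1$ otherwise. An $R$-semimodule is a commutative semigroup $(M,+)$ with an action $R\times M\to M$ satisfying $r(sx)=(rs)x$, $(r+s)x=rx+sx$, $r(x+y)=rx+ry$. A subsemimodule is a subsemigroup closed under the action; a semimodule congruence is an equivalence compatible with $+$ and the action. $M$ is quasitrivial if $rx=sx$ for all $r,s,x$; id-quasitrivial if $rx=x$ for all $r,x$; sub-irreducible if not quasitrivial and all proper subsemimodules are id-quasitrivial; quotient-irreducible if not quasitrivial and its only congruences are the identity and $M\times M$; irreducible if both. *)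

From mathcomp Require Import all_boot all_order.
Set Implicit Arguments. Unset Strict Implicit. Unset Printing Implicit Defensive.
Import Order.TTheory.
Local Open Scope order_scope.

Definition JM1 (d : Order.disp_t) (L : finTJoinSemilatticeType d) (f : L -> L) : Prop :=
  (forall x y : L, f (x `|` y) = f x `|` f y) /\ f \top = \top.

Definition fjoin (d : Order.disp_t) (L : finTJoinSemilatticeType d)
  (f g : {ffun L -> L}) : {ffun L -> L} := [ffun x => f x `|` g x].
Definition fcomp (d : Order.disp_t) (L : finTJoinSemilatticeType d)
  (f g : {ffun L -> L}) : {ffun L -> L} := [ffun x => f (g x)].

Definition subsemiring_JM1 (d : Order.disp_t) (L : finTJoinSemilatticeType d)
  (R : {set {ffun L -> L}}) : Prop :=
  (forall f, f \in R -> JM1 f) /\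
  (forall f g, f \in R -> g \in R -> fjoin f g \in R) /\
  (forall f g, f \in R -> g \in R -> fcomp f g \in R).

Definition semiring_congruence (d : Order.disp_t) (L : finTJoinSemilatticeType d)
  (R : {set {ffun L -> L}}) (E : {ffun L -> L} -> {ffun L -> L} -> Prop) : Prop :=
  (forall r, r \in R -> E r r) /\
  (forall r s, r \in R -> s \in R -> E r s -> E s r) /\
  (forall r s t, r \in R -> s \in R -> t \in R -> E r s -> E s t -> E r t) /\
  (forall r s t, r \in R -> s \in R -> t \in R -> E r s ->
     [/\ E (fjoin r t) (fjoin s t), E (fcomp t r) (fcomp t s) & E (fcomp r t) (fcomp s t)]).

Definition simple_semiring (d : Order.disp_t) (L : finTJoinSemilatticeType d)
  (R : {set {ffun L -> L}}) : Prop :=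
  forall E, semiring_congruence R E ->
    (forall r s, r \in R -> s \in R -> (E r s <-> r = s)) \/
    (forall r s, r \in R -> s \in R -> E r s).

Definition fab (d : Order.disp_t) (L : finTJoinSemilatticeType d) (a b : L)
  : {ffun L -> L} := [ffun x => if x <= a then b else \top].

(* Generic notions for an R-semimodule (M, add) with action act,
   scalars ranging over the predicate Rs. *)
Section Semimodule.
Variables (A M : Type) (Rs : A -> Prop) (add : M -> M -> M) (act : A -> M -> M).

Definition quasitrivial : Prop :=
  forall r s x, Rs r -> Rs s -> act r x = act s x.

Definition id_quasitrivial_on (S : M -> Prop) : Prop :=
  forall r x, Rs r -> S x -> act r x = x.

Definition subsemimodule (S : M -> Prop) : Prop :=
  (forall x y, S x -> S y -> S (add x y)) /\
  (forall r x, Rs r -> S x -> S (act r x)).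

Definition sub_irreducible : Prop :=
  ~ quasitrivial /\
  forall S, subsemimodule S -> (exists x, ~ S x) -> id_quasitrivial_on S.

Definition semimodule_congruence (E : M -> M -> Prop) : Prop :=
  (forall x, E x x) /\ (forall x y, E x y -> E y x) /\
  (forall x y z, E x y -> E y z -> E x z) /\
  (forall x y z, E x y -> E (add x z) (add y z)) /\
  (forall r x y, Rs r -> E x y -> E (act r x) (act r y)).

Definition quotient_irreducible : Prop :=
  ~ quasitrivial /\
  forall E, semimodule_congruence E ->
    (forall x y, E x y <-> x = y) \/ (forall x y, E x y).

Definition irreducible : Prop := sub_irreducible /\ quotient_irreducible.
End Semimodule.

From mathcomp Require Import all_boot all_order.
From Stdlib Require Import Classical.
Import Order.TTheory.
Local Open Scope order_scope.

(* The maps f_{y,b} alone force irreducibility.  If y <> 1, then f_{y,b} sends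
   y to b, so a subsemimodule containing y contains everything; hence a proper
   one lies in {1}, which every element of JM_1(L) fixes.  If a congruence
   identifies x and y with x not below y, then applying f_{y,b} identifies
   f_{y,b} x = 1 with f_{y,b} y = b for every b, so the congruence is full. *)

Lemma exists_neq_top {d : Order.disp_t} {L : finTJoinSemilatticeType d} :
  (1 < #|L|)%N -> exists a : L, a != \top.
Proof.
case/card_gt1P=> x [y [_ _ neq_xy]].
have [x_top | x_ntop] := eqVneq x \top; last by exists x.
by exists y; rewrite eq_sym -x_top.
Qed.

Lemma fab_le {d : Order.disp_t} {L : finTJoinSemilatticeType d} (a b x : L) :
  x <= a -> fab a b x = b.
Proof. by rewrite ffunE => ->. Qed.

Lemma fab_nle {d : Order.disp_t} {L : finTJoinSemilatticeType d} (a b x : L) :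
  ~~ (x <= a) -> fab a b x = \top.
Proof. by rewrite ffunE => /negbTE->. Qed.

Section FabScalars.
Context {d : Order.disp_t} {L : finTJoinSemilatticeType d} {R : {set {ffun L -> L}}}.
Hypothesis fabR : forall a b : L, a != \top -> fab a b \in R.
Arguments fabR {a} b.

Local Notation inR := (fun f => f \in R).
Local Notation join := (fun x y : L => x `|` y).
Local Notation act := (fun (f : {ffun L -> L}) (x : L) => f x).

Lemma fab_not_quasitrivial {a : L} : a != \top -> ~ quasitrivial inR act.
Proof.
move=> a_ntop qt; move: (qt _ _ a (fabR a a_ntop) (fabR \top a_ntop)).
by rewrite !fab_le // => a_top; rewrite a_top eqxx in a_ntop.
Qed.

Lemma proper_subsemimodule_sub_top {S : L -> Prop} :
  subsemimodule inR join act S -> (exists x, ~ S x) -> forall y, S y -> y = \top.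
Proof.
move=> [_ S_act] [x S'x] y Sy; have [// | y_ntop] := eqVneq y \top.
by move: (S_act _ _ (fabR x y_ntop) Sy); rewrite fab_le.
Qed.

Lemma congruence_top_full {E : L -> L -> Prop} {x y : L} :
  semimodule_congruence inR join act E -> E x y -> ~~ (x <= y) ->
  forall b, E \top b.
Proof.
move=> [_ [_ [_ [_ E_act]]]] Exy nle_xy b.
have y_ntop : y != \top by apply: contraNneq nle_xy => ->; exact: lex1.
by move: (E_act _ _ _ (fabR b y_ntop) Exy); rewrite fab_nle // fab_le.
Qed.

Lemma congruence_full {E : L -> L -> Prop} {x y : L} :
  semimodule_congruence inR join act E -> E x y -> x <> y -> forall u v, E u v.
Proof.
move=> congE Exy neq_xy u v.
have [_ [E_sym [E_trans _]]] := congE.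
have E_top : forall b, E \top b.
  have [le_xy | nle_xy] := boolP (x <= y); last exact: congruence_top_full Exy nle_xy.
  have [le_yx | nle_yx] := boolP (y <= x); last exact: congruence_top_full (E_sym _ _ Exy) nle_yx.
  by case: neq_xy; apply/le_anti; rewrite le_xy le_yx.
exact: E_trans (E_sym _ _ (E_top u)) (E_top v).
Qed.

Lemma congruence_trivial_or_full {E : L -> L -> Prop} :
  semimodule_congruence inR join act E ->
  (forall x y, E x y <-> x = y) \/ (forall x y, E x y).
Proof.
move=> congE; have [E_refl _] := congE.
have [[x [y [Exy neq_xy]]] | E_diag] := classic (exists x y, E x y /\ x <> y).
  by right; exact: congruence_full Exy neq_xy.
left=> x y; split=> [Exy | ->]; last exact: E_refl.
by apply: NNPP => neq_xy; apply: E_diag; exists x, y.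
Qed.

End FabScalars.

Theorem proposition4p4 (d : Order.disp_t) (L : finTJoinSemilatticeType d)
  (R : {set {ffun L -> L}}) :
  (1 < #|L|)%N ->
  subsemiring_JM1 R ->
  simple_semiring R ->
  (2 < #|R|)%N ->
  (forall a b : L, a != \top -> fab a b \in R) ->
  irreducible (fun f => f \in R) (fun x y : L => x `|` y)
    (fun (f : {ffun L -> L}) (x : L) => f x).
Proof.
move=> cardL [R_JM1 _] _ _ fabR.
have [a a_ntop] := exists_neq_top cardL.
have not_qt := fab_not_quasitrivial fabR a_ntop.
split; split=> //.
- move=> S subS properS r y Rr Sy.
  rewrite (proper_subsemimodule_sub_top fabR subS properS y Sy).
  by have [_ ->] := R_JM1 r Rr.
- by move=> E; exact: (congruence_trivial_or_full fabR).
Qed.
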